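(* Assume $t_m=1$. If $w$ is a left special factor of $u_\beta$, then either $w=0^r$ for some $r\in\mathbb N$ with $r\le t_1$, or $w=\varphi(v)0^s$ for some left special factor $v$ of $u_\beta$ and some $s\in\mathbb N$.
   Context: $\beta>1$ is a simple Parry number with $d_\beta(1)=t_1\cdots t_{m-1}t_m$, $m\ge2$, nonnegative integer digits, $t_1\ge1$, satisfying the Parry condition ($t_i\cdots t_m0^\omega$ lexicographically strictly smaller than $t_1\cdots t_m0^\omega$ for $2\le i\le m$). $\varphi$ is the substitution on $\mathcal A=\{0,\dots,m-1\}$ with $\varphi(k)=0^{t_{k+1}}(k+1)$ for $0\le k\le m-2$, $\varphi(m-1)=0^{t_m}$ (so $\varphi(m-1)=0$ when $t_m=1$), and $u_\beta=\lim_n\varphi^n(0)$ is its fixed point. A factor $w$ is left special if at least two distinct letters $a$ make $aw$ a factor of $u_\beta$. *)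

From mathcomp Require Import all_boot.
Set Implicit Arguments. Unset Strict Implicit. Unset Printing Implicit Defensive.

(* d_beta(1) = t_1 ... t_m is represented by the list t, with t_i = nth 0 t (i-1)
   and m = size t.  Letters of the alphabet {0,...,m-1} are natural numbers. *)

Definition tpad (t : seq nat) (n : nat) : nat := nth 0 t n.

(* Parry condition: for 2 <= i <= m, t_i ... t_m 0^omega <_lex t_1 ... t_m 0^omega
   (strict lexicographic order on infinite sequences). *)
Definition parry_condition (t : seq nat) : Prop :=
  forall i, 2 <= i <= size t ->
    exists k, (forall j, j < k -> tpad t (i.-1 + j) = tpad t j)
              /\ tpad t (i.-1 + k) < tpad t k.

Definition phi (t : seq nat) (k : nat) : seq nat :=
  if k < (size t).-1 then rcons (nseq (nth 0 t k) 0) k.+1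
  else nseq (nth 0 t (size t).-1) 0.

Definition phiw (t : seq nat) (w : seq nat) : seq nat := flatten (map (phi t) w).

(* The fixed point u_beta = lim phi^n(0): its n-th letter is read off the
   prefix phi^{n+1}(0), which has length > n (phi(0) starts with 0 since t_1 >= 1,
   so the words phi^k(0) form a strictly increasing chain of prefixes). *)
Definition ubeta (t : seq nat) (n : nat) : nat :=
  nth 0 (iter n.+1 (phiw t) [:: 0]) n.

Definition factor (t : seq nat) (w : seq nat) : Prop :=
  exists i, w = mkseq (fun j => ubeta t (i + j)) (size w).

Definition left_special (t : seq nat) (w : seq nat) : Prop :=
  exists a b, a <> b /\ factor t (a :: w) /\ factor t (b :: w).

From mathcomp Require Import all_boot zify.

Set Implicit Arguments.
Unset Strict Implicit.
Unset Printing Implicit Defensive.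

(* Since t_m = 1, the fixed point u_beta = phi(u_beta) is a concatenation of
   blocks phi(a) = 0^{t_{a+1}} (a+1) for a < m - 1 and phi(m-1) = 0: every
   nonzero letter ends a block, and a 0 ending a block is a whole block.
   Let w be left special, with first nonzero letter c at index r.  If r < t_c,
   every occurrence of w starts inside the zero run of a block 0^{t_c} c, so w
   is always preceded by 0, which is impossible.  Otherwise the zeros before
   that run are whole blocks, so each occurrence of w starts at a block
   boundary and w, cut after its last nonzero letter, is phi(v) for a factor
   v; as phi is injective on words and the letter before w is the last letter
   of phi(b) for the letter b before v, two left extensions of w give two
   left extensions of v. *)

Lemma nth_prefix (T : eqType) (x0 : T) s1 s2 n :
  prefix s1 s2 -> n < size s1 -> nth x0 s2 n = nth x0 s1 n.
Proof. by case/prefixP => s ->; rewrite nth_cat => ->. Qed.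

Lemma exists_last_nth (T : Type) (x0 : T) (p : pred T) s : has p s ->
  exists q, [/\ q < size s, p (nth x0 s q) & ~~ has p (drop q.+1 s)].
Proof.
elim/last_ind: s => // s x IH; rewrite has_rcons size_rcons.
case px: (p x) => /= hps.
  by exists (size s); rewrite nth_rcons ltnn eqxx drop_oversize ?size_rcons.
have [q [hq pq hdrop]] := IH hps.
exists q; rewrite nth_rcons hq drop_rcons // has_rcons px; split=> //; lia.
Qed.

Section FixedPoint.

Variable t : seq nat.
Hypotheses (m_ge2 : 2 <= size t) (t1_gt0 : 1 <= nth 0 t 0)
  (tm_eq1 : nth 0 t (size t).-1 = 1).

Definition over_alphabet (w : seq nat) : bool := all (fun a => a < size t) w.

Lemma phiw_cat x y : phiw t (x ++ y) = phiw t x ++ phiw t y.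
Proof. by rewrite /phiw map_cat flatten_cat. Qed.

Lemma phiw_cons a x : phiw t (a :: x) = phi t a ++ phiw t x.
Proof. by []. Qed.

Lemma phiw_rcons x a : phiw t (rcons x a) = phiw t x ++ phi t a.
Proof. by rewrite -cats1 phiw_cat /phiw /= cats0. Qed.

Lemma size_phi a :
  size (phi t a) = if a < (size t).-1 then (nth 0 t a).+1 else 1.
Proof. by rewrite /phi; case: ifP => _; rewrite ?size_rcons size_nseq ?tm_eq1. Qed.

Lemma size_phi_gt0 a : 0 < size (phi t a).
Proof. by rewrite size_phi; case: ifP. Qed.

Lemma last_phi a : last 0 (phi t a) = if a < (size t).-1 then a.+1 else 0.
Proof. by rewrite /phi; case: ifP => _; rewrite ?last_rcons // tm_eq1. Qed.

Lemma nth_phi_neq0 a k : nth 0 (phi t a) k != 0 ->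
  [/\ a < (size t).-1, k = nth 0 t a & nth 0 (phi t a) k = a.+1].
Proof.
rewrite /phi; case: ifP => ha; last by rewrite nth_nseq; case: ifP.
by rewrite nth_rcons size_nseq nth_nseq; case: ltngtP.
Qed.

Lemma nth_phi_zero_run a k : a < (size t).-1 -> k < nth 0 t a -> nth 0 (phi t a) k = 0.
Proof. by move=> ha hk; rewrite /phi ha nth_rcons size_nseq nth_nseq hk. Qed.

Lemma size_phiw_ge x : size x <= size (phiw t x).
Proof.
by elim: x => //= a x IH; rewrite phiw_cons size_cat; have := size_phi_gt0 a; lia.
Qed.

Lemma phiw_over_alphabet x : over_alphabet x -> over_alphabet (phiw t x).
Proof.
elim: x => //= a x IH /andP [ha /IH hx]; rewrite phiw_cons /over_alphabet all_cat.
apply/andP; split=> //.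
have m_gt0 : 0 < size t by lia.
by rewrite /phi; case: ifP => h; rewrite ?all_rcons all_nseq m_gt0 orbT ?andbT; lia.
Qed.

Lemma phiw_inj : {in over_alphabet &, injective (phiw t)}.
Proof.
have phiw_rcons_neq_nil x a : phiw t (rcons x a) != [::].
  by rewrite phiw_rcons -size_eq0 size_cat addn_eq0 negb_and -!lt0n size_phi_gt0 orbT.
move=> x y; elim/last_ind: x y => [|x a IH]; case/lastP => [|y b] //.
- by move=> _ _ /esym/eqP; rewrite (negbTE (phiw_rcons_neq_nil _ _)).
- by move=> _ _ /eqP; rewrite (negbTE (phiw_rcons_neq_nil _ _)).
rewrite !unfold_in /over_alphabet !all_rcons => /andP [ha hx] /andP [hb hy].
rewrite !phiw_rcons => e.
have eab : a = b.
  have last_phiw_rcons z c : last 0 (phiw t z ++ phi t c) = last 0 (phi t c).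
    by rewrite last_cat; case: (phi t c) (size_phi_gt0 c).
  have := congr1 (last 0) e; rewrite !last_phiw_rcons !last_phi.
  by case: ifP => h1; case: ifP => h2 //; [case | lia].
subst b; congr rcons; apply: IH => //.
have /eqP := e; rewrite eqseq_cat => [/andP [/eqP] //|].
by move/(congr1 size): e; rewrite !size_cat => /addIn.
Qed.

Definition phi_iter (n : nat) : seq nat := iter n (phiw t) [:: 0].

Lemma phiw_prefix x y : prefix x y -> prefix (phiw t x) (phiw t y).
Proof. by case/prefixP => z ->; rewrite phiw_cat prefix_prefix. Qed.

Lemma phi_iter_prefix : {homo phi_iter : k n / k <= n >-> prefix k n}.
Proof.
apply: homo_leq => [||n]; [exact: prefix_refl | exact: prefix_trans |].
elim: n => [|n IH]; last exact: phiw_prefix.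
rewrite /phi_iter /= /phiw /= cats0 /phi (_ : 0 < (size t).-1); last by lia.
by rewrite -(prednK t1_gt0) /= prefix0s.
Qed.

Lemma size_phi_iter n : n < size (phi_iter n).
Proof.
elim: n => // n IH.
have /prefixP [s e] : prefix [:: 0] (phi_iter n) := phi_iter_prefix (leq0n n).
have size_phi0 : 2 <= size (phi t 0) by rewrite size_phi (_ : 0 < (size t).-1); lia.
have := size_phiw_ge s; move: IH; rewrite /= e /= phiw_cons size_cat /=; lia.
Qed.

Lemma ubeta_phi_iter N n : n < size (phi_iter N) -> ubeta t n = nth 0 (phi_iter N) n.
Proof.
move=> hn; rewrite /ubeta -/(phi_iter n.+1).
case: (leqP N n.+1) => hN.
  by rewrite (nth_prefix 0 (phi_iter_prefix hN)).
by rewrite (nth_prefix 0 (phi_iter_prefix (ltnW hN))) // ltnW ?size_phi_iter.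
Qed.

Lemma ubeta_lt_size n : ubeta t n < size t.
Proof.
have alphabet_iter k : over_alphabet (phi_iter k).
  by elim: k => [|k IH]; [rewrite /over_alphabet /=; lia | exact: phiw_over_alphabet].
rewrite (ubeta_phi_iter (size_phi_iter n)).
by move/allP: (alphabet_iter n); apply; rewrite mem_nth ?size_phi_iter.
Qed.

Definition ubeta_seg (i n : nat) : seq nat := mkseq (fun k => ubeta t (i + k)) n.

Definition block_start (j : nat) : nat := size (phiw t (ubeta_seg 0 j)).

Lemma ubeta_segD i a b : ubeta_seg i (a + b) = ubeta_seg i a ++ ubeta_seg (i + a) b.
Proof.
apply: (@eq_from_nth _ 0) => [|k]; first by rewrite size_cat !size_mkseq.
rewrite size_mkseq nth_cat size_mkseq => hk.
case: ltnP => h; rewrite !nth_mkseq //; [congr (ubeta t) |]; lia.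
Qed.

Lemma ubeta_seg_cons i n : ubeta_seg i n.+1 = ubeta t i :: ubeta_seg i.+1 n.
Proof. by rewrite -add1n ubeta_segD /= addn0 addn1. Qed.

Lemma ubeta_seg_prefix n : prefix (ubeta_seg 0 n) (phi_iter n).
Proof.
rewrite prefixE size_mkseq; apply/eqP/(@eq_from_nth _ 0) => [|k].
  by rewrite size_take size_mkseq (size_phi_iter n).
rewrite size_take (size_phi_iter n) => hk.
by rewrite nth_take // nth_mkseq // (ubeta_phi_iter (ltn_trans hk (size_phi_iter n))).
Qed.

(* The fixed-point equation u_beta = phi(u_beta), read on prefixes. *)
Lemma phiw_ubeta_prefix j : phiw t (ubeta_seg 0 j) = ubeta_seg 0 (block_start j).
Proof.
have pre : prefix (phiw t (ubeta_seg 0 j)) (phi_iter j.+1).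
  exact: phiw_prefix (ubeta_seg_prefix j).
apply: (@eq_from_nth _ 0) => [|k]; first by rewrite size_mkseq.
move=> hk; rewrite nth_mkseq // (ubeta_phi_iter (leq_trans hk (size_prefix pre))).
by rewrite (nth_prefix 0 pre).
Qed.

Lemma phiw_ubeta_seg j n :
  phiw t (ubeta_seg j n) = ubeta_seg (block_start j) (block_start (j + n) - block_start j).
Proof.
have hsize : block_start (j + n) = block_start j + size (phiw t (ubeta_seg j n)).
  by rewrite /block_start ubeta_segD phiw_cat size_cat.
have := phiw_ubeta_prefix (j + n); rewrite ubeta_segD phiw_cat phiw_ubeta_prefix.
rewrite hsize addKn ubeta_segD => /(congr1 (drop (block_start j))).
by rewrite !drop_size_cat ?size_mkseq.
Qed.

Lemma ubeta_seg1 i : ubeta_seg i 1 = [:: ubeta t i].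
Proof. by rewrite /ubeta_seg /mkseq /= addn0. Qed.

Lemma block_start0 : block_start 0 = 0.
Proof. by []. Qed.

Lemma block_startS j : block_start j.+1 = block_start j + size (phi t (ubeta t j)).
Proof.
by rewrite /block_start -addn1 ubeta_segD phiw_cat size_cat ubeta_seg1 /phiw /= cats0.
Qed.

Lemma ubeta_block j k : k < size (phi t (ubeta t j)) ->
  ubeta t (block_start j + k) = nth 0 (phi t (ubeta t j)) k.
Proof.
move=> hk; have := phiw_ubeta_seg j 1.
rewrite ubeta_seg1 /phiw /= cats0 addn1 block_startS addKn => ->.
by rewrite nth_mkseq.
Qed.

Lemma block_start_ltn : {mono block_start : a b / a < b}.
Proof.
apply/leqW_mono/leq_mono/(homo_ltn ltn_trans) => j.
by rewrite block_startS; have := size_phi_gt0 (ubeta t j); lia.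
Qed.

Lemma block_start_cover p : exists j, block_start j <= p < block_start j.+1.
Proof.
elim: p => [|p [j /andP [lo hi]]].
  by exists 0; have := block_start_ltn 0 1; rewrite block_start0 => ->.
case: (ltnP p.+1 (block_start j.+1)) => h; first by exists j; rewrite h andbT; lia.
by exists j.+1; have := block_start_ltn j.+1 j.+2; rewrite ltnSn; lia.
Qed.

Lemma ubeta_neq0_block_end p : ubeta t p != 0 -> exists j,
  [/\ ubeta t j < (size t).-1, ubeta t p = (ubeta t j).+1,
      p = block_start j + nth 0 t (ubeta t j) & block_start j.+1 = p.+1].
Proof.
have [j /andP [lo hi]] := block_start_cover p.
have hk : p - block_start j < size (phi t (ubeta t j)).
  by move: hi; rewrite block_startS; lia.
have := ubeta_block hk; rewrite subnKC // => -> /nth_phi_neq0 [hj hp ->].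
by exists j; split=> //; [lia | rewrite block_startS size_phi hj; lia].
Qed.

Lemma ubeta_before_block_start j :
  ubeta t (block_start j.+1).-1 = last 0 (phi t (ubeta t j)).
Proof.
have hs := size_phi_gt0 (ubeta t j).
rewrite block_startS -nth_last -ubeta_block; [congr (ubeta t) | ]; lia.
Qed.

(* Every block other than phi(m-1) = 0 ends with a nonzero letter. *)
Lemma block_end_eq0 j :
  ubeta t (block_start j.+1).-1 = 0 -> block_start j.+1 = (block_start j).+1.
Proof.
rewrite ubeta_before_block_start last_phi.
by case: ifP => // h _; rewrite block_startS size_phi h addn1.
Qed.

Lemma zeros_before_block_start j d : d <= block_start j ->
  (forall e, e < d -> ubeta t (block_start j - e.+1) = 0) ->
  block_start (j - d) = block_start j - d.
Proof.
elim: d => [|d IH] hd hz; first by rewrite !subn0.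
have IHd := IH (ltnW hd) (fun e he => hz e (ltnW he)).
have [j' ej] : exists j', j - d = j'.+1.
  case: (j - d) IHd => [|j'] IHd; last by exists j'.
  by move: IHd; rewrite block_start0; lia.
have := @block_end_eq0 j'; rewrite -ej IHd -subnS hz // => h.
by rewrite !subnS ej h.
Qed.

Lemma zero_run_block_start p r :
  (forall k, k < r -> ubeta t (p + k) = 0) -> ubeta t (p + r) != 0 ->
  nth 0 t (ubeta t (p + r)).-1 <= r -> exists j, block_start j = p.
Proof.
move=> hz /ubeta_neq0_block_end [j [_ -> hpos _]] /= hT.
set T := nth 0 t (ubeta t j) in hpos hT.
exists (j - (r - T)); rewrite zeros_before_block_start; [lia | lia |].
move=> e he; have -> : block_start j - e.+1 = p + (r - T - e.+1) by lia.
apply: hz; lia.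
Qed.

Lemma phiw_seg_from_block_start j q : ubeta t (block_start j + q) != 0 ->
  exists n, phiw t (ubeta_seg j n) = ubeta_seg (block_start j) q.+1.
Proof.
move=> /ubeta_neq0_block_end [j' [_ _ _ hend]].
have hjj' : j < j'.+1 by rewrite -block_start_ltn hend; lia.
by exists (j'.+1 - j); rewrite phiw_ubeta_seg subnKC ?hend; [congr ubeta_seg; lia | lia].
Qed.

Lemma factor_consP x w :
  factor t (x :: w) <-> exists i, x = ubeta t i /\ w = ubeta_seg i.+1 (size w).
Proof.
rewrite /factor /=; split=> [[i] | [i [-> ew]]].
  by rewrite -/(ubeta_seg i _) ubeta_seg_cons => -[-> ew]; exists i.
by exists i; rewrite -/(ubeta_seg i _) ubeta_seg_cons -ew.
Qed.

Lemma factor_over_alphabet w : factor t w -> over_alphabet w.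
Proof. by case=> i ->; apply/allP => _ /mapP [k _ ->]; exact: ubeta_lt_size. Qed.

Lemma left_special_nil : left_special t [::].
Proof.
have phi_iter1 : phi_iter 1 = rcons (nseq (nth 0 t 0) 0) 1.
  by rewrite /phi_iter /= /phiw /= cats0 /phi (_ : 0 < (size t).-1) //; lia.
have hsize : size (phi_iter 1) = (nth 0 t 0).+1 by rewrite phi_iter1 size_rcons size_nseq.
exists 0, 1; split=> //; split; apply/factor_consP.
  exists 0; rewrite (ubeta_phi_iter (N := 1)) ?hsize // phi_iter1.
  by rewrite nth_rcons size_nseq t1_gt0 nth_nseq t1_gt0.
exists (nth 0 t 0); rewrite (ubeta_phi_iter (N := 1)) ?hsize // phi_iter1.
by rewrite nth_rcons size_nseq ltnn eqxx.
Qed.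

Lemma factor_cons_eq0 x w r : factor t (x :: w) -> nth 0 w r != 0 ->
  r < nth 0 t (nth 0 w r).-1 -> x = 0.
Proof.
case/factor_consP => i [-> ew] hr.
have hrw : r < size w by rewrite ltnNge; apply: contra hr => /(nth_default 0) ->.
rewrite {1 2}ew nth_mkseq // in hr *.
case/ubeta_neq0_block_end: hr => j [hj -> hpos _] /= hlt.
have -> : i = block_start j + (nth 0 t (ubeta t j) - r.+1) by lia.
by rewrite ubeta_block ?nth_phi_zero_run ?size_phi ?hj; lia.
Qed.

Lemma factor_cons_desubst x w r q : factor t (x :: w) ->
  (forall k, k < r -> nth 0 w k = 0) -> nth 0 w r != 0 ->
  nth 0 t (nth 0 w r).-1 <= r -> nth 0 w q != 0 ->
  exists y v, [/\ x = last 0 (phi t y), factor t (y :: v) & phiw t v = take q.+1 w].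
Proof.
case/factor_consP => i [-> ew] hz hr hT hq.
have size_w k : nth 0 w k != 0 -> k < size w.
  by rewrite ltnNge; apply: contra => /(nth_default 0) ->.
have nth_w k : k < size w -> nth 0 w k = ubeta t (i.+1 + k).
  by move=> hk; rewrite {1}ew nth_mkseq.
have [[|j] hj] : exists j, block_start j = i.+1.
  have hrw := size_w r hr.
  apply: (@zero_run_block_start _ r) => [k hk||]; rewrite -nth_w //.
  - exact: hz.
  - exact: ltn_trans hk hrw.
  by rewrite block_start0 in hj.
have [n hn] : exists n, phiw t (ubeta_seg j.+1 n) = ubeta_seg i.+1 q.+1.
  by rewrite -hj; apply: phiw_seg_from_block_start; rewrite hj -nth_w ?size_w.
exists (ubeta t j), (ubeta_seg j.+1 n); split.
- by rewrite -ubeta_before_block_start hj.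
- by apply/factor_consP; exists j; rewrite size_mkseq.
rewrite hn {1}ew -(subnKC (size_w q hq)) ubeta_segD take_size_cat //.
by rewrite size_mkseq.
Qed.

Lemma left_special_desubst w : left_special t w -> ~~ all (pred1 0) w ->
  exists v s, left_special t v /\ w = phiw t v ++ nseq s 0.
Proof.
move=> [a [b [hab [fa fb]]]]; rewrite -has_predC => hw.
set r := find (predC (pred1 0)) w.
have hr : nth 0 w r != 0 := nth_find 0 hw.
have hz k : k < r -> nth 0 w k = 0 by move/(before_find 0)/negbFE/eqP.
have [q [_ hq hdrop]] := exists_last_nth 0 hw.
have [hT | hT] := ltnP r (nth 0 t (nth 0 w r).-1).
  by case: hab; rewrite (factor_cons_eq0 fa hr hT) (factor_cons_eq0 fb hr hT).
have [ya [va [ea fva pva]]] := factor_cons_desubst fa hz hr hT hq.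
have [yb [vb [eb fvb pvb]]] := factor_cons_desubst fb hz hr hT hq.
have factor_behead y v : factor t (y :: v) -> factor t v.
  by case/factor_consP => i [_ ev]; exists i.+1.
have evab : va = vb.
  apply: phiw_inj; rewrite ?pva ?pvb // unfold_in.
  - exact/factor_over_alphabet/factor_behead/fva.
  - exact/factor_over_alphabet/factor_behead/fvb.
exists va, (size w - q.+1); split.
  exists ya, yb; split; last by split; rewrite // evab.
  by move=> eyab; apply: hab; rewrite ea eb eyab.
rewrite pva -{1}(cat_take_drop q.+1 w); congr cat.
have /all_pred1P -> : all (pred1 0) (drop q.+1 w) by rewrite -[all _ _]negbK -has_predC.
by rewrite size_drop.
Qed.

End FixedPoint.

Theorem lemma7 (t : seq nat) :
  2 <= size t ->
  1 <= nth 0 t 0 ->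
  parry_condition t ->
  nth 0 t (size t).-1 = 1 ->
  forall w : seq nat, left_special t w ->
    (exists r : nat, r <= nth 0 t 0 /\ w = nseq r 0) \/
    (exists (v : seq nat) (s : nat), left_special t v /\ w = phiw t v ++ nseq s 0).
Proof.
move=> m_ge2 t1_gt0 _ tm_eq1 w lsw; right.
have [/all_pred1P -> | w_nz] := boolP (all (pred1 0) w).
  by exists [::], (size w); split; first exact: left_special_nil.
exact: left_special_desubst.
Qed.
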